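(* Let $\mathbf s^1:\mathcal X\to\{0,1\}^m$ be a first selection rule and, for $c\in[k]$, let $\tilde{\mathbf d}_c:\{0,1\}^m\times\mathcal X\to\mathcal D_c$ be decision strategies and $\tilde{\mathbf s}_c:\mathcal D_c\times\mathcal X\to\{0,1\}^m$ selection strategies. Suppose that for every $c\in[k]$ the extended selection rule $\mathbf g_c(\mathbf S,\mathbf X)=\tilde{\mathbf s}_c(\tilde{\mathbf d}_c(\mathbf S,\mathbf X),\mathbf X)$ is contracting ($\mathbf g_c(\mathbf S,\mathbf X)\preceq\mathbf S$ with probability 1 for all $\mathbf S$) and increasing ($\mathbf g_c(\mathbf S,\mathbf X)\preceq\mathbf g_c(\mathbf S',\mathbf X)$ with probability 1 for all $\mathbf S\preceq\mathbf S'$). Then the parallel intersection procedure and the sequential composition procedure (defined in the context) converge to the same selected set and the same decisions.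
   Context: $\preceq$ is the componentwise order on $\{0,1\}^m$; $\bigcap$ of vectors in $\{0,1\}^m$ is the componentwise product. Parallel intersection: $\mathbf S^1=\mathbf s^1(\mathbf X)$; for $t\ge1$, $\mathbf D_c^t=\tilde{\mathbf d}_c(\mathbf S^t,\mathbf X)$ and $\mathbf S_c^{t+1}=\tilde{\mathbf s}_c(\mathbf D_c^t,\mathbf X)$ for all $c$, $\mathbf S^{t+1}=\bigcap_{c\in[k]}\mathbf S_c^{t+1}$; stop at the first $T$ with $\mathbf S^{T+1}=\mathbf S^T$. Sequential composition: $\mathbf S^1=\mathbf s^1(\mathbf X)$; for $t\ge1$, set $\mathbf S'^{t+1}_0=\mathbf S^t$ and for $c=1,\dots,k$, $\mathbf D_c^t=\tilde{\mathbf d}_c(\mathbf S'^{t+1}_{c-1},\mathbf X)$, $\mathbf S'^{t+1}_c=\tilde{\mathbf s}_c(\mathbf D_c^t,\mathbf X)$; then $\mathbf S^{t+1}=\mathbf S'^{t+1}_k$; stop at the first $T$ with $\mathbf S^{T+1}=\mathbf S^T$. Each procedure outputs its final selected set and decisions $(\mathbf D_c^T)_{c\in[k]}$. *)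

From mathcomp Require Import all_boot.
Set Implicit Arguments. Unset Strict Implicit. Unset Printing Implicit Defensive.

Definition selvec (m : nat) := {ffun 'I_m -> bool}.

Definition vle (m : nat) (S S' : selvec m) : Prop := forall i, S i ==> S' i.

Definition vcap (m k : nat) (F : 'I_k -> selvec m) : selvec m :=
  [ffun i => [forall c, F c i]].

Section Procedures.
Variables (Xt : Type) (m k : nat) (D : 'I_k -> Type).
Variables (s1 : Xt -> selvec m)
          (d : forall c : 'I_k, selvec m -> Xt -> D c)
          (s : forall c : 'I_k, D c -> Xt -> selvec m).
Variable X : Xt.

Definition gsel (c : 'I_k) (S : selvec m) (X0 : Xt) : selvec m := @s c (@d c S X0) X0.

Definition par_step (S : selvec m) : selvec m := vcap (fun c => gsel c S X).
(* parS t = S^t for t >= 1 (paper indexing); parS 1 = s1 X *)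
Definition parS (t : nat) : selvec m := iter t.-1 par_step (s1 X).
Definition parD (t : nat) (c : 'I_k) : D c := @d c (parS t) X.
Definition par_first_stop (T : nat) : Prop :=
  1 <= T /\ parS T.+1 = parS T /\ (forall t, 1 <= t -> t < T -> parS t.+1 <> parS t).

(* seq_part S j = S'_j (j = 0..k), with S'_0 = S and
   S'_{j+1} = s_{c}(d_c(S'_j, X), X) for the (j+1)-th component c (0-indexed j) *)
Fixpoint seq_part (S : selvec m) (j : nat) : selvec m :=
  match j with
  | 0 => S
  | j'.+1 => match @insub nat (fun n => n < k) 'I_k j' with
             | Some c => gsel c (seq_part S j') X
             | None => seq_part S j'
             end
  end.
Definition seq_step (S : selvec m) : selvec m := seq_part S k.
Definition seqS (t : nat) : selvec m := iter t.-1 seq_step (s1 X).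
(* decision of the (paper) component c+1 at round t: d_c(S'^{t+1}_{c}, X)
   where the 0-indexed c : 'I_k uses S'_{val c} (paper S'_{(c+1)-1}) *)
Definition seqD (t : nat) (c : 'I_k) : D c := @d c (seq_part (seqS t) c) X.
Definition seq_first_stop (T : nat) : Prop :=
  1 <= T /\ seqS T.+1 = seqS T /\ (forall t, 1 <= t -> t < T -> seqS t.+1 <> seqS t).

End Procedures.

(** Both procedures iterate a contracting map on the finite lattice
  [{0,1}^m], so the number of selected coordinates strictly decreases until
  a fixed point is reached.  A fixed point of either procedure is a common
  fixed point of all the [g_c], and since the [g_c] are increasing, every
  common fixed point below [s^1(X)] stays below all iterates of either
  procedure.  Hence both limits are the greatest common fixed point of the
  [g_c] below [s^1(X)]; there every intermediate set of a sequential round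
  equals the limit, so the decisions agree too. *)
From mathcomp Require Import all_boot.

Set Implicit Arguments.
Unset Strict Implicit.
Unset Printing Implicit Defensive.

Lemma iter_stabilizes (T : eqType) (f : T -> T) (phi : T -> nat) :
  (forall x, f x <> x -> phi (f x) < phi x) ->
  forall x, exists n, iter n.+1 f x = iter n f x.
Proof.
move=> phi_dec x; elim: {x}(phi x).+1 {-2}x (ltnSn (phi x)) => // p IHp x lt_phi.
have [fx_x|/eqP/phi_dec lt_fx] := eqVneq (f x) x; first by exists 0.
have [n fix_n] := IHp (f x) (leq_trans lt_fx lt_phi).
by exists n.+1; rewrite iterSr fix_n iterSr.
Qed.

Lemma iter_pred_fixpoint (T : Type) (f : T -> T) x n :
  0 < n -> iter n f x = iter n.-1 f x -> f (iter n.-1 f x) = iter n.-1 f x.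
Proof. by case: n. Qed.

Section SelectionVectors.
Variable m : nat.
Implicit Types A B F S : selvec m.

Lemma vle_refl S : vle S S.
Proof. by move=> i; apply/implyP. Qed.

Lemma vle_trans A B C : vle A B -> vle B C -> vle A C.
Proof. by move=> leAB leBC i; apply/implyP=> /(implyP (leAB i)) /(implyP (leBC i)). Qed.

Lemma vle_anti A B : vle A B -> vle B A -> A = B.
Proof.
move=> leAB leBA; apply/ffunP=> i.
by move: (leAB i) (leBA i); case: (A i); case: (B i).
Qed.

Lemma vle_vcap k F (G : 'I_k -> selvec m) :
  (forall c, vle F (G c)) -> vle F (vcap G).
Proof.
move=> leFG i; apply/implyP=> Fi; rewrite ffunE; apply/forallP=> c.
exact: implyP (leFG c i) Fi.
Qed.

Lemma vcap_vle k (G : 'I_k -> selvec m) c : vle (vcap G) (G c).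
Proof. by move=> i; rewrite ffunE; apply/implyP=> /forallP. Qed.

Lemma vle_card_lt A B :
  vle A B -> A <> B -> #|[pred i | A i]| < #|[pred i | B i]|.
Proof.
move=> leAB neAB; apply: proper_card; rewrite properE; apply/andP; split.
  by apply/subsetP=> i; rewrite !inE; apply/implyP.
apply: contra_notN neAB => /subsetP leBA; apply: vle_anti => // i.
by apply/implyP=> Bi; have := leBA i; rewrite !inE; apply.
Qed.

Lemma vle_iter (f : selvec m -> selvec m) F S n :
  (forall S', vle F S' -> vle F (f S')) -> vle F S -> vle F (iter n f S).
Proof. by move=> f_vle leFS; elim: n => //= n IHn; apply: f_vle. Qed.

Section ContractingMap.
Variable f : selvec m -> selvec m.
Hypothesis f_contr : forall S, vle (f S) S.

Lemma iter_contr n S : vle (iter n f S) S.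
Proof. by elim: n => [|n IHn] /=; [apply: vle_refl | apply: vle_trans IHn]. Qed.

Lemma contr_first_stop S : exists T, 1 <= T /\ iter T f S = iter T.-1 f S /\
  (forall t, 1 <= t -> t < T -> iter t f S <> iter t.-1 f S).
Proof.
have /ex_minnP[n /eqP fix_n min_n] : exists n, iter n.+1 f S == iter n f S.
  have [n fix_n] := iter_stabilizes (fun S' => vle_card_lt (f_contr S')) S.
  by exists n; apply/eqP.
exists n.+1; do 2!split=> //; case=> // t _ lt_tn /eqP fix_t.
by have := min_n t fix_t; rewrite leqNgt -ltnS lt_tn.
Qed.

End ContractingMap.
End SelectionVectors.

Section Procedures.
Variables (Xt : Type) (m k : nat) (D : 'I_k -> Type)
  (s1 : Xt -> selvec m)
  (d : forall c : 'I_k, selvec m -> Xt -> D c)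
  (s : forall c : 'I_k, D c -> Xt -> selvec m)
  (X : Xt).
Hypothesis g_contr : forall c S, vle (gsel d s c S X) S.
Hypothesis g_incr : forall c S S',
  vle S S' -> vle (gsel d s c S X) (gsel d s c S' X).

Definition common_fixpoint (S : selvec m) := forall c, gsel d s c S X = S.

Lemma common_fixpoint_vle F S :
  common_fixpoint F -> vle F S -> forall c, vle F (gsel d s c S X).
Proof. by move=> fixF leFS c; rewrite -(fixF c); apply: g_incr. Qed.

Lemma par_step_contr : 0 < k -> forall S, vle (par_step d s X S) S.
Proof. by move=> k_gt0 S; apply: vle_trans (vcap_vle _ (Ordinal k_gt0)) _. Qed.

Lemma par_step_fixpoint S : par_step d s X S = S -> common_fixpoint S.
Proof.
move=> fixS c; apply: vle_anti => //.
by rewrite -{1}fixS; apply: vcap_vle.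
Qed.

Lemma par_step_vle F S :
  common_fixpoint F -> vle F S -> vle F (par_step d s X S).
Proof. by move=> fixF leFS; apply/vle_vcap/common_fixpoint_vle. Qed.

Lemma seq_part_ord S (c : 'I_k) :
  seq_part d s X S c.+1 = gsel d s c (seq_part d s X S c) X.
Proof. by rewrite /= valK. Qed.

Lemma seq_part_vle S i j :
  i <= j -> vle (seq_part d s X S j) (seq_part d s X S i).
Proof.
apply: (@homo_leq _ _ (fun A B => vle B A)) => [A|A B C|j'].
- exact: vle_refl.
- by move=> leAB leCA; apply: vle_trans leAB.
- by rewrite /=; case: insubP => [c _ _|_]; [apply: g_contr | apply: vle_refl].
Qed.

Lemma seq_step_contr S : vle (seq_step d s X S) S.
Proof. exact: (seq_part_vle S (leq0n k)). Qed.

Lemma seq_step_fixpoint_part S :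
  seq_step d s X S = S -> forall j, j <= k -> seq_part d s X S j = S.
Proof.
move=> fixS j le_jk; apply: vle_anti; first exact: (seq_part_vle S (leq0n j)).
by rewrite -{1}fixS; apply: seq_part_vle.
Qed.

Lemma seq_step_fixpoint S : seq_step d s X S = S -> common_fixpoint S.
Proof.
move=> fixS c; have := seq_step_fixpoint_part fixS (ltn_ord c).
by rewrite seq_part_ord (seq_step_fixpoint_part fixS (ltnW (ltn_ord c))).
Qed.

Lemma seq_step_vle F S :
  common_fixpoint F -> vle F S -> vle F (seq_step d s X S).
Proof.
move=> fixF leFS; suff: forall j, vle F (seq_part d s X S j) by apply.
by elim=> //= j IHj; case: insubP => // c _ _; apply: common_fixpoint_vle.
Qed.

Lemma parS_vle F t :
  common_fixpoint F -> vle F (s1 X) -> vle F (parS s1 d s X t).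
Proof. by move=> fixF; rewrite /parS; apply: vle_iter => S; apply: par_step_vle. Qed.

Lemma seqS_vle F t :
  common_fixpoint F -> vle F (s1 X) -> vle F (seqS s1 d s X t).
Proof. by move=> fixF; rewrite /seqS; apply: vle_iter => S; apply: seq_step_vle. Qed.

Lemma par_first_stop_step_fixed T :
  par_first_stop s1 d s X T -> par_step d s X (parS s1 d s X T) = parS s1 d s X T.
Proof. by case=> T_gt0 [stop _]; apply: iter_pred_fixpoint. Qed.

Lemma seq_first_stop_step_fixed T :
  seq_first_stop s1 d s X T -> seq_step d s X (seqS s1 d s X T) = seqS s1 d s X T.
Proof. by case=> T_gt0 [stop _]; apply: iter_pred_fixpoint. Qed.

End Procedures.

Theorem proposition9 (Xt : Type) (m k : nat) (D : 'I_k -> Type)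
  (s1 : Xt -> selvec m)
  (d : forall c : 'I_k, selvec m -> Xt -> D c)
  (s : forall c : 'I_k, D c -> Xt -> selvec m)
  (X : Xt)
  (hk : 0 < k)
  (hcontr : forall (c : 'I_k) (S : selvec m), vle (gsel d s c S X) S)
  (hincr : forall (c : 'I_k) (S S' : selvec m),
      vle S S' -> vle (gsel d s c S X) (gsel d s c S' X)) :
  (exists T, par_first_stop s1 d s X T) /\
  (exists T, seq_first_stop s1 d s X T) /\
  (forall T1 T2, par_first_stop s1 d s X T1 -> seq_first_stop s1 d s X T2 ->
     parS s1 d s X T1 = seqS s1 d s X T2 /\
     forall c : 'I_k, parD s1 d s X T1 c = seqD s1 d s X T2 c).
Proof.
have par_contr := par_step_contr hcontr hk.
have seq_contr := seq_step_contr hcontr.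
split; first exact: contr_first_stop par_contr (s1 X).
split; first exact: contr_first_stop seq_contr (s1 X).
move=> T1 T2 par_stop seq_stop.
have par_fix := par_step_fixpoint hcontr (par_first_stop_step_fixed par_stop).
have seq_fixed := seq_first_stop_step_fixed seq_stop.
have seq_fix := seq_step_fixpoint hcontr seq_fixed.
have par_eq_seq : parS s1 d s X T1 = seqS s1 d s X T2.
  apply: vle_anti.
    exact: (seqS_vle hincr T2 par_fix (iter_contr par_contr _ _)).
  exact: (parS_vle hincr T1 seq_fix (iter_contr seq_contr _ _)).
split=> // c; rewrite /parD /seqD par_eq_seq.
by rewrite (seq_step_fixpoint_part hcontr seq_fixed (ltnW (ltn_ord c))).
Qed.
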